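(* Let $r\ge 0$, $k\ge r$ and $t>r+1$ be integers, and let $\Omega=\lfloor tr/(t-1)\rfloor+1$, $a=t(r+1)+(1-t)\Omega$, $b=t-1-a$. Then \[t\binom{k+2-(r+1)}{2}-b\binom{k+2-\Omega}{2}-a\binom{k+2-(\Omega+1)}{2}=\binom{k+2}{2}-\binom{r+2}{2}-\sum_{j=1}^{k-r}(r+j+1-j\,t)_+ .\]
   Context: $(x)_+=\max(x,0)$; an empty sum is $0$. Binomial coefficients follow the convention $\binom{m}{2}=m(m-1)/2$ for integers $m\ge 2$ and $\binom{m}{2}=0$ for $m<2$. *)

From mathcomp Require Import all_boot all_order all_algebra.
Import Order.TTheory GRing.Theory Num.Theory.
Local Open Scope ring_scope.

Definition binom2 (m : int) : int :=
  if (2 <= m)%R then ((m * (m - 1)) %/ 2)%Z else 0.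

Definition posp (x : int) : int := Num.max x 0.

(* The hypothesis r + 1 < t collapses all the data: floor(tr/(t-1)) = r, so
   Omega = a = r + 1 and b = t - r - 2, and every summand r + 1 - j(t - 1) of
   the correction sum is nonpositive.  What remains is the polynomial identity
   (r + 2) C(n + 1, 2) - (r + 1) C(n, 2) = C(n + r + 2, 2) - C(r + 2, 2)
   with n = k - r, checked after clearing the halves in binom2. *)

From mathcomp Require Import all_boot all_order all_algebra.
From mathcomp Require Import zify ring.
Import Order.TTheory GRing.Theory Num.Theory.
Local Open Scope ring_scope.

Lemma dvdz2_mul_pred (n : int) : (2 %| n * (n - 1))%Z.
Proof.
rewrite (divz_eq n 2); set q := (n %/ 2)%Z; set e := (n %% 2)%Z.
have [E|E] : e = 0 \/ e = 1.
  have := modz_ge0 n (isT : 2 != 0 :> int); have := @ltz_pmod n 2 isT; lia.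
- by apply/dvdzP; exists (q * (q * 2 - 1)); rewrite E; ring.
- by apply/dvdzP; exists (q * (q * 2 + 1)); rewrite E; ring.
Qed.

Lemma binom2E (n : int) : 0 <= n -> 2 * binom2 n = n * (n - 1).
Proof.
move=> n_ge0; rewrite /binom2; case: ifP => [_ | n_lt2].
  by rewrite mulrC divzK ?dvdz2_mul_pred.
by have [->|->] : n = 0 \/ n = 1 by lia.
Qed.

Lemma binom2_shift_identity (r n : int) : 0 <= r -> 0 <= n ->
  (r + 2) * binom2 (n + 1) - (r + 1) * binom2 n
  = binom2 (n + r + 2) - binom2 (r + 2).
Proof.
move=> r_ge0 n_ge0; apply: (@mulfI _ 2) => //.
rewrite !mulrBr ![2 * (_ * _)]mulrCA !binom2E; first ring.
all: lia.
Qed.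

Lemma divz_mul_pred_small (t r : int) : 0 <= r -> r + 1 < t ->
  ((t * r) %/ (t - 1))%Z = r.
Proof.
move=> r_ge0 rt.
have -> : t * r = r * (t - 1) + r by ring.
rewrite divzMDl; last by apply/eqP; lia.
by rewrite divz_small ?addr0 //; apply/andP; split; lia.
Qed.

Lemma posp_eq0 (x : int) : x <= 0 -> posp x = 0.
Proof. by move=> x_le0; rewrite /posp max_r. Qed.

Theorem lemma4p3 (r k t : int) (hr : 0 <= r) (hk : r <= k) (ht : r + 1 < t) :
  let Omega : int := ((t * r) %/ (t - 1))%Z + 1 in
  let a : int := t * (r + 1) + (1 - t) * Omega in
  let b : int := t - 1 - a in
  t * binom2 (k + 2 - (r + 1)) - b * binom2 (k + 2 - Omega)
    - a * binom2 (k + 2 - (Omega + 1))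
  = binom2 (k + 2) - binom2 (r + 2)
    - \sum_(1 <= j < `|k - r|%N.+1) posp (r + j%:Z + 1 - j%:Z * t).
Proof.
move=> Omega a b.
have OmegaE : Omega = r + 1 by rewrite /Omega divz_mul_pred_small.
have aE : a = r + 1 by rewrite /a OmegaE; ring.
have bE : b = t - r - 2 by rewrite /b aE; ring.
have -> : \sum_(1 <= j < `|k - r|%N.+1) posp (r + j%:Z + 1 - j%:Z * t) = 0.
  rewrite big_nat_cond big1 // => j /andP[/andP[j_ge1 _] _].
  by apply: posp_eq0; nia.
have -> : k + 2 = (k - r) + r + 2 by ring.
rewrite -(binom2_shift_identity r (k - r)) ?subr_ge0 // OmegaE aE bE subr0.
have -> : k - r + r + 2 - (r + 1) = k - r + 1 by ring.
have -> : k - r + r + 2 - (r + 1 + 1) = k - r by ring.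
by ring.
Qed.
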